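(* Let $d$ be a feasible integer and let $P\in\mathbb F[\lambda]$ be any monic polynomial of degree $d$. Then there exists a standard $U_q(\widehat{\mathfrak{sl}}_2)$-module $V$ of diameter $d$ with $P_V=P$.
   Context: Let $\mathbb F$ be an algebraically closed field and fix nonzero $q\in\mathbb F$ with $q^2\ne1$; write $[n]_q=(q^n-q^{-n})/(q-q^{-1})$. $U_q(\widehat{\mathfrak{sl}}_2)$ is the associative unital $\mathbb F$-algebra with generators $e_i^{\pm},K_i^{\pm1}$ ($i\in\{0,1\}$) and relations $K_iK_i^{-1}=K_i^{-1}K_i=1$, $K_0K_1=K_1K_0$, $K_ie_i^{\pm}K_i^{-1}=q^{\pm2}e_i^{\pm}$, $K_ie_j^{\pm}K_i^{-1}=q^{\mp2}e_j^{\pm}$ ($i\ne j$), $e_i^+e_i^--e_i^-e_i^+=(K_i-K_i^{-1})/(q-q^{-1})$, $e_0^{\pm}e_1^{\mp}=e_1^{\mp}e_0^{\pm}$, and $(e_i^\pm)^3e_j^\pm-[3]_q(e_i^\pm)^2e_j^\pm e_i^\pm+[3]_qe_i^\pm e_j^\pm(e_i^\pm)^2-e_j^\pm(e_i^\pm)^3=0$ ($i\ne j$). Tensor products of modules are formed via $e_i^+(v\otimes w)=e_i^+v\otimes K_iw+v\otimes e_i^+w$, $e_i^-(v\otimes w)=e_i^-v\otimes w+K_i^{-1}v\otimes e_i^-w$, $K_i(v\otimes w)=K_iv\otimes K_iw$. For nonzero $\alpha\in\mathbb F$, $V(\alpha)$ is the module with basis $x,y$ and $K_1x=qx$, $K_1y=q^{-1}y$,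 $e_1^-x=y$, $e_1^-y=0$, $e_1^+x=0$, $e_1^+y=x$, $K_0x=q^{-1}x$, $K_0y=qy$, $e_0^-x=0$, $e_0^-y=q\alpha^{-1}x$, $e_0^+x=q^{-1}\alpha y$, $e_0^+y=0$. A standard module of diameter $d$ is $V(\alpha_1)\otimes\cdots\otimes V(\alpha_d)$ with all $\alpha_i\in\mathbb F$ nonzero (for $d=0$: the trivial module, on which each $e_i^\pm$ acts as $0$ and each $K_i^{\pm1}$ as $1$). An integer $d$ is feasible if $d\ge0$ and $q^{2i}\ne1$ for $1\le i\le d$. For a standard $V$ of diameter $d$, $U_0$ is the $1$-dimensional span of $x\otimes\cdots\otimes x$. Fix nonzero $b,c,b^*,c^*\in\mathbb F$ and $u,v,u^*,v^*\in\mathbb F$ with $uv^*=-bb^*q^{-1}(q-q^{-1})^2$ and $vu^*=-cc^*q^{-1}(q-q^{-1})^2$; set $R=ue_0^++ve_1^-K_1$ and $L=u^*e_1^++v^*e_0^-K_0$. For a standard module $V$ of feasible diameter $d$ and $0\le i\le d$, $\zeta_i$ is the scalar by which $L^iR^i$ acts on $U_0$, and $\sigma_i=\zeta_i/\prod_{k=1}^i(q^k-q^{-k})^2$. For $i\ge0$ let $f_i=bb^*q^{-2i}+cc^*q^{2i}-\lambda\in\mathbb F[\lambda]$. The Drinfel'd polynomial of $V$ is the monic degree-$d$ polynomial $P_V=(-1)^d\sum_{i=0}^d\sigma_{d-i}f_0f_1\cdots f_{i-1}$. *)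

From HB Require Import structures.
From mathcomp Require Import all_boot all_order all_algebra.
Set Implicit Arguments. Unset Strict Implicit. Unset Printing Implicit Defensive.
Import Order.TTheory GRing.Theory.
Local Open Scope ring_scope.

(* Conventions: a linear operator on an n-dimensional space with a fixed
   ordered basis is an n x n matrix M acting on COLUMN vectors, i.e.
   M i j = coefficient of basis vector i in the image of basis vector j.
   V(alpha) has ordered basis (x, y): index 0 = x, index 1 = y. *)

Section StandardModules.
Variable F : fieldType.
Variable q : F.

(* Kronecker product A (x) B for A acting on a 2-dim space; basis of the
   tensor product ordered as x(x)w_1,...,x(x)w_n, y(x)w_1,...,y(x)w_n. *)
Definition kron2 n (A : 'M[F]_2) (B : 'M[F]_n) : 'M[F]_(n + n) :=
  block_mx (A ord0 ord0 *: B) (A ord0 ord_max *: B)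
           (A ord_max ord0 *: B) (A ord_max ord_max *: B).

Definition Kmat (k : F) : 'M[F]_2 :=
  \matrix_(i < 2, j < 2) if i == j then (if i == ord0 then k else k^-1) else 0.
(* the map x |-> c y, y |-> 0 *)
Definition lowmx (c : F) : 'M[F]_2 :=
  \matrix_(i < 2, j < 2) if (i == ord_max) && (j == ord0) then c else 0.
(* the map x |-> 0, y |-> c x *)
Definition upmx (c : F) : 'M[F]_2 :=
  \matrix_(i < 2, j < 2) if (i == ord0) && (j == ord_max) then c else 0.

Definition VK1 : 'M[F]_2 := Kmat q.
Definition VK1inv : 'M[F]_2 := Kmat q^-1.
Definition VK0 : 'M[F]_2 := Kmat q^-1.
Definition VK0inv : 'M[F]_2 := Kmat q.
Definition Ve1m : 'M[F]_2 := lowmx 1.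
Definition Ve1p : 'M[F]_2 := upmx 1.
Definition Ve0m (a : F) : 'M[F]_2 := upmx (q * a^-1).
Definition Ve0p (a : F) : 'M[F]_2 := lowmx (q^-1 * a).

(* The standard module V(a_1) (x) ... (x) V(a_d), for s = [:: a_1; ...; a_d],
   built as V(a_1) (x) (V(a_2) (x) ( ... )) ; the empty product is the
   trivial 1-dimensional module. *)
Fixpoint sdim (s : seq F) : nat :=
  if s is _ :: t then (sdim t + sdim t)%N else 1%N.

(* action of K (given its matrix on V(alpha), independent of alpha) *)
Fixpoint stK (K : 'M[F]_2) (s : seq F) : 'M[F]_(sdim s) :=
  match s return 'M[F]_(sdim s) with
  | [::] => 1%:M
  | _ :: t => kron2 K (stK K t)
  end.

(* e^+(v (x) w) = e^+ v (x) K w + v (x) e^+ w *)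
Fixpoint stEp (E : F -> 'M[F]_2) (K : 'M[F]_2) (s : seq F) : 'M[F]_(sdim s) :=
  match s return 'M[F]_(sdim s) with
  | [::] => 0
  | a :: t => kron2 (E a) (stK K t) + kron2 1%:M (stEp E K t)
  end.

(* e^-(v (x) w) = e^- v (x) w + K^-1 v (x) e^- w *)
Fixpoint stEm (E : F -> 'M[F]_2) (Kinv : 'M[F]_2) (s : seq F) : 'M[F]_(sdim s) :=
  match s return 'M[F]_(sdim s) with
  | [::] => 0
  | a :: t => kron2 (E a) 1%:M + kron2 Kinv (stEm E Kinv t)
  end.

Definition st_K0 s := stK VK0 s.
Definition st_K1 s := stK VK1 s.
Definition st_e0p s := stEp Ve0p VK0 s.
Definition st_e1p s := stEp (fun _ => Ve1p) VK1 s.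
Definition st_e0m s := stEm Ve0m VK0inv s.
Definition st_e1m s := stEm (fun _ => Ve1m) VK1inv s.

(* the vector x (x) ... (x) x spanning U_0 *)
Fixpoint u0vec (s : seq F) : 'cV[F]_(sdim s) :=
  match s return 'cV[F]_(sdim s) with
  | [::] => 1%:M
  | _ :: t => col_mx (u0vec t) 0
  end.

Variables (u v us vs : F).

Definition Rop s : 'M[F]_(sdim s) := u *: st_e0p s + v *: (st_e1m s *m st_K1 s).
Definition Lop s : 'M[F]_(sdim s) := us *: st_e1p s + vs *: (st_e0m s *m st_K0 s).

(* zeta_i : the scalar by which L^i R^i acts on U_0, i.e. the coefficient
   of x(x)...(x)x in L^i R^i (x(x)...(x)x). *)
Definition zeta s (i : nat) : F :=
  let w : 'cV[F]_(sdim s) :=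
    iter i (fun x : 'cV[F]_(sdim s) => Lop s *m x)
      (iter i (fun x : 'cV[F]_(sdim s) => Rop s *m x) (u0vec s)) in
  ((u0vec s)^T *m w) ord0 ord0.

Definition sigma s (i : nat) : F :=
  zeta s i / \prod_(1 <= k < i.+1) (q ^+ k - q ^- k) ^+ 2.

Variables (b c bs cs : F).

Definition fpoly (i : nat) : {poly F} :=
  (b * bs * q ^- (2 * i) + c * cs * q ^+ (2 * i))%:P - 'X.

Definition drinfeld_poly (s : seq F) : {poly F} :=
  let d := size s in
  (-1) ^+ d *: \sum_(i < d.+1) (sigma s (d - i) *: \prod_(j < i) fpoly j).

End StandardModules.

Definition feasible (F : fieldType) (q : F) (d : nat) : Prop :=
  forall i : nat, (1 <= i <= d)%N -> q ^+ (2 * i) != 1.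

(* Writing a standard module of diameter n + 1 as V(a) (x) W, the operators K,
   R and L become 2 x 2 block matrices over W: K is block diagonal, R is block
   lower- and L block upper-triangular, and their corner blocks are linear
   combinations of K-operators.  Since x (x) ... (x) x is a weight vector and
   R, L shift weights by fixed factors, zeta for V(a) (x) W equals zeta for W
   plus an explicit multiple of the previous zeta of W (zeta_cons).  Summing
   the q-geometric series in that multiple gives the recursion
     sigma_(i+1)(V(a) (x) W) = sigma_(i+1)(W) + (theta a - phi (n - i)) sigma_i(W),
   and a telescoping identity for the sums defining the Drinfel'd polynomial
   turns it into P_(V(a) (x) W) = (lambda - theta a) P_W.  Hence P_V is the
   product of the lambda - theta a_k.  Finally theta a = z is a quadratic
   equation in a with nonzero constant term, solvable with a != 0 over an
   algebraically closed field, so every root of a monic P is realized. *)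

From HB Require Import structures.
From mathcomp Require Import all_boot all_order all_algebra.
From mathcomp Require Import ring.
Import GRing.Theory.
Local Open Scope ring_scope.

Set Implicit Arguments. Unset Strict Implicit. Unset Printing Implicit Defensive.

Section TensorBlocks.
Variable F : fieldType.

Lemma kron2_Kmat n (k : F) (B : 'M[F]_n) :
  kron2 (Kmat k) B = block_mx (k *: B) 0 0 (k^-1 *: B).
Proof. by rewrite /kron2 !mxE /= !scale0r. Qed.

Lemma kron2_lowmx n (k : F) (B : 'M[F]_n) :
  kron2 (lowmx k) B = block_mx 0 0 (k *: B) 0.
Proof. by rewrite /kron2 !mxE /= !scale0r. Qed.

Lemma kron2_upmx n (k : F) (B : 'M[F]_n) :
  kron2 (upmx k) B = block_mx 0 (k *: B) 0 0.
Proof. by rewrite /kron2 !mxE /= !scale0r. Qed.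

Lemma kron2_1 n (B : 'M[F]_n) : kron2 1%:M B = block_mx B 0 0 B.
Proof. by rewrite /kron2 !mxE /= !scale0r !scale1r. Qed.

End TensorBlocks.

Section Weights.
Variable F : fieldType.

Lemma stK_cons (k a : F) t :
  stK (Kmat k) (a :: t) = block_mx (k *: stK (Kmat k) t) 0 0 (k^-1 *: stK (Kmat k) t).
Proof. exact: kron2_Kmat. Qed.

Lemma stK_mul (k k' : F) t :
  stK (Kmat k) t *m stK (Kmat k') t = stK (Kmat (k * k')) t.
Proof.
elim: t => [|a t IH]; first by rewrite /= mulmx1.
rewrite !stK_cons mulmx_block !(mul0mx, mulmx0, addr0, add0r).
by rewrite -!scalemxAl -!scalemxAr IH !scalerA invfM.
Qed.

Lemma stK_comm (k k' : F) t :
  stK (Kmat k) t *m stK (Kmat k') t = stK (Kmat k') t *m stK (Kmat k) t.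
Proof. by rewrite !stK_mul mulrC. Qed.

Lemma stK_u0 (k : F) t : stK (Kmat k) t *m u0vec t = k ^+ size t *: u0vec t.
Proof.
elim: t => [|a t IH]; first by rewrite /= mulmx1 expr0 scale1r.
rewrite stK_cons /= mul_block_col !(mul0mx, mulmx0, addr0) -scalemxAl IH.
by rewrite scalerA scale_col_mx scaler0 exprS.
Qed.

Variables (q u v us vs : F).
Hypothesis q0 : q != 0.

Lemma Rop_cons a t : Rop q u v (a :: t) =
  block_mx (Rop q u v t) 0
    ((u * q^-1 * a) *: st_K0 q t + (v * q) *: st_K1 q t) (Rop q u v t).
Proof.
rewrite /Rop /st_e0p /st_e1m /= -/(st_K1 q t) -/(st_K0 q t) -/(st_e0p q t).
rewrite -/(st_e1m q t) /st_K1 stK_cons -/(st_K1 q t).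
rewrite /Ve0p /Ve1m /VK1inv kron2_lowmx kron2_1 kron2_Kmat kron2_lowmx.
rewrite !add_block_mx mulmx_block !scale_block_mx add_block_mx.
rewrite !(mul0mx, mulmx0, addr0, add0r, scaler0).
rewrite -!scalemxAl -!scalemxAr !scalerA invrK divfK // mulfK // mulr1 mul1mx.
by rewrite !mulrA.
Qed.

Lemma Lop_cons a t : Lop q us vs (a :: t) =
  block_mx (Lop q us vs t)
    (us *: st_K1 q t + (vs * (q * a^-1) * q) *: st_K0 q t) 0 (Lop q us vs t).
Proof.
rewrite /Lop /st_e1p /st_e0m /= -/(st_K1 q t) -/(st_K0 q t) -/(st_e1p q t).
rewrite -/(st_e0m q t) /st_K0 /VK0 stK_cons invrK -/(st_K0 q t).
rewrite /Ve0m /Ve1p /VK0inv kron2_upmx kron2_1 kron2_Kmat kron2_upmx.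
rewrite !add_block_mx mulmx_block !scale_block_mx add_block_mx.
rewrite !(mul0mx, mulmx0, addr0, add0r, scaler0).
by rewrite -!scalemxAl -!scalemxAr !scalerA divfK // mulfK // mulr1 mul1mx.
Qed.

Lemma Rop_nil : Rop q u v [::] = 0.
Proof. by rewrite /Rop /= mul0mx !scaler0 addr0. Qed.

Lemma Lop_nil : Lop q us vs [::] = 0.
Proof. by rewrite /Lop /= mul0mx !scaler0 addr0. Qed.

Lemma stK_comm_comb (k k1 k2 al be : F) t :
  stK (Kmat k) t *m (al *: stK (Kmat k1) t + be *: stK (Kmat k2) t) =
  (al *: stK (Kmat k1) t + be *: stK (Kmat k2) t) *m stK (Kmat k) t.
Proof. by rewrite mulmxDr mulmxDl -!scalemxAl -!scalemxAr !(stK_comm k). Qed.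

Lemma stK_Rop (k : F) t : k != 0 ->
  stK (Kmat k) t *m Rop q u v t = (k^-1 * k^-1) *: (Rop q u v t *m stK (Kmat k) t).
Proof.
move=> k0; elim: t => [|a t IH]; first by rewrite Rop_nil mulmx0 mul0mx scaler0.
rewrite stK_cons Rop_cons !mulmx_block !(mul0mx, mulmx0, addr0, add0r).
rewrite scale_block_mx -!scalemxAl -!scalemxAr ?IH ?stK_comm_comb !scalerA ?scaler0.
by congr block_mx; congr (_ *: _); field.
Qed.

Lemma stK_Lop (k : F) t : k != 0 ->
  stK (Kmat k) t *m Lop q us vs t = (k * k) *: (Lop q us vs t *m stK (Kmat k) t).
Proof.
move=> k0; elim: t => [|a t IH]; first by rewrite Lop_nil mulmx0 mul0mx scaler0.
rewrite stK_cons Lop_cons !mulmx_block !(mul0mx, mulmx0, addr0, add0r).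
rewrite scale_block_mx -!scalemxAl -!scalemxAr ?IH ?stK_comm_comb !scalerA ?scaler0.
by congr block_mx; congr (_ *: _); field.
Qed.

End Weights.

Section BlockIterates.
Variable F : fieldType.

Definition mx_orbit n (A : 'M[F]_n) (j : nat) (x : 'cV[F]_n) : 'cV[F]_n :=
  iter j (fun y => A *m y) x.

Lemma orbit_eigen n (K A : 'M[F]_n) c (x : 'cV[F]_n) lam j :
  K *m A = c *: (A *m K) -> K *m x = lam *: x ->
  K *m mx_orbit A j x = (lam * c ^+ j) *: mx_orbit A j x.
Proof.
move=> hA hx; elim: j => [|j IH] /=; first by rewrite expr0 mulr1.
rewrite /mx_orbit /= -/(mx_orbit A j x) mulmxA hA -scalemxAl -mulmxA IH.
by rewrite -scalemxAr scalerA exprS mulrCA mulrA.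
Qed.

Lemma orbit_lower_block n (A B : 'M[F]_n) (x0 : 'cV[F]_n) (beta : nat -> F) i :
  (forall j, B *m mx_orbit A j x0 = beta j *: mx_orbit A j x0) ->
  mx_orbit (block_mx A 0 B A) i (col_mx x0 0) =
  col_mx (mx_orbit A i x0) ((\sum_(j < i) beta j) *: mx_orbit A i.-1 x0).
Proof.
move=> hB; elim: i => [|i IH]; first by rewrite big_ord0 scale0r.
rewrite /mx_orbit /= -!/(mx_orbit _ _ _) IH mul_block_col mul0mx addr0 hB.
rewrite -scalemxAr big_ord_recr /=.
case: i IH => [|i] IH; first by rewrite big_ord0 !scale0r add0r addr0.
by rewrite scalerDl addrC.
Qed.

Lemma orbit_upper_block n (A C : 'M[F]_n) (p r : 'cV[F]_n) (k : F) (g : nat -> F) m :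
  (forall l, C *m mx_orbit A l r = g l *: mx_orbit A l r) ->
  mx_orbit (block_mx A C 0 A) m (col_mx p (k *: r)) =
  col_mx (mx_orbit A m p + (k * \sum_(l < m) g l) *: mx_orbit A m.-1 r)
         (k *: mx_orbit A m r).
Proof.
move=> hC; elim: m => [|m IH]; first by rewrite big_ord0 mulr0 scale0r addr0.
rewrite /mx_orbit /= -!/(mx_orbit _ _ _) IH mul_block_col mul0mx add0r -scalemxAr hC.
rewrite scalerA mulmxDr -!scalemxAr big_ord_recr /=.
case: m IH => [|m] IH; first by rewrite big_ord0 !mulr0 add0r scale0r addr0.
by rewrite mulrDr scalerDl addrA.
Qed.

End BlockIterates.

Section ZetaRecursion.
Variable F : fieldType.
Variables (q u v us vs : F).
Hypothesis q0 : q != 0.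

Local Notation R t := (Rop q u v t).
Local Notation L t := (Lop q us vs t).

Definition LRvec (t : seq F) (l j : nat) : 'cV[F]_(sdim t) :=
  mx_orbit (L t) l (mx_orbit (R t) j (u0vec t)).

Definition weight (k : F) (n j l : nat) : F :=
  k ^+ n * (k^-1 * k^-1) ^+ j * (k * k) ^+ l.

Lemma stK_LRvec k t l j : k != 0 ->
  stK (Kmat k) t *m LRvec t l j = weight k (size t) j l *: LRvec t l j.
Proof.
move=> k0; apply: orbit_eigen; first exact: stK_Lop.
by apply: orbit_eigen; [exact: stK_Rop | exact: stK_u0].
Qed.

(* Scalars by which the corner blocks of R (a :: t) and L (a :: t) act on
   R^j u0 resp. L^l R^i u0 in the tensor factor t. *)
Definition beta (a : F) (t : seq F) (j : nat) : F :=
  u * q^-1 * a * weight q^-1 (size t) j 0 + v * q * weight q (size t) j 0.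
Definition gam (a : F) (t : seq F) (i l : nat) : F :=
  us * weight q (size t) i l + vs * (q * a^-1) * q * weight q^-1 (size t) i l.

(* Adding a tensor factor V(a) adds a correction term to zeta, obtained
   from the block-triangular shape of R and L. *)
Lemma zeta_cons (a : F) (t : seq F) i : zeta q u v us vs (a :: t) i.+1 =
  zeta q u v us vs t i.+1 +
  (\sum_(j < i.+1) beta a t j) * (\sum_(l < i.+1) gam a t i l) *
  zeta q u v us vs t i.
Proof.
have q0' : q^-1 != 0 by rewrite invr_eq0.
rewrite /zeta -!/(mx_orbit _ _ _) Rop_cons // Lop_cons // [u0vec _]/=.
rewrite (@orbit_lower_block _ _ _ _ _ (beta a t)); last first.
  move=> j; rewrite mulmxDl -!scalemxAl.
  by rewrite !(stK_LRvec _ 0) // !scalerA -scalerDl.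
rewrite (@orbit_upper_block _ _ _ _ _ _ _ (gam a t i)); last first.
  move=> l; rewrite mulmxDl -!scalemxAl.
  by rewrite !(stK_LRvec _ l) // !scalerA -scalerDl.
by rewrite tr_col_mx mul_row_col trmx0 mul0mx addr0 mulmxDr -scalemxAr !mxE.
Qed.

Lemma zeta0 s : zeta q u v us vs s 0 = 1.
Proof.
rewrite /zeta /=; elim: s => [|a t IH]; first by rewrite /= trmx1 mulmx1 mxE.
by rewrite [u0vec _]/= tr_col_mx mul_row_col trmx0 mul0mx addr0.
Qed.

Lemma zeta_big s i : (size s < i)%N -> zeta q u v us vs s i = 0.
Proof.
elim: s i => [|a t IH] [|i] //=.
  by move=> _; rewrite /zeta /= Rop_nil Lop_nil !mul0mx mulmx0 mxE.
by move=> hi; rewrite zeta_cons (IH i.+1) ?(IH i) ?mulr0 ?addr0 // ltnW.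
Qed.

Lemma sigma0 s : sigma q u v us vs s 0 = 1.
Proof. by rewrite /sigma zeta0 big_geq // divr1. Qed.

Lemma sigma_big s i : (size s < i)%N -> sigma q u v us vs s i = 0.
Proof. by move=> h; rewrite /sigma zeta_big // mul0r. Qed.

End ZetaRecursion.

Section QNumbers.
Variable F : fieldType.

Definition qint (k : F) (m : nat) : F := (k ^+ m - k ^- m) / (k - k^-1).

Lemma qint_inv (k : F) m : qint k^-1 m = qint k m.
Proof.
rewrite /qint !exprVn !invrK.
by rewrite -[k^-1 - k]opprB -[_^-1 - _]opprB invrN mulrNN.
Qed.

Lemma sub_inv_neq0 (x : F) : x != 0 -> (x - x^-1 != 0) = (x * x - 1 != 0).
Proof.
move=> x0; have -> : x * x - 1 = (x - x^-1) * x by field.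
by rewrite mulf_eq0 negb_or x0 andbT.
Qed.

Lemma sum_sq_powers (k : F) m : k - k^-1 != 0 ->
  \sum_(j < m.+1) (k * k) ^+ j = k ^+ m * qint k m.+1.
Proof.
move=> d0; have k0 : k != 0 by apply: contraNneq d0 => ->; rewrite invr0 subrr.
apply: (mulIf d0); rewrite /qint -[RHS]mulrA divfK //.
have -> : k - k^-1 = (k * k - 1) * k^-1 by field.
rewrite mulrA [_ * (k * k - 1)]mulrC -subrX1 exprMn !exprS; field; rewrite expf_neq0 // k0.
Qed.

Lemma qdiff_neq0 (k : F) : k != 0 -> k ^+ 2 != 1 -> k - k^-1 != 0.
Proof. by move=> k0 hk; rewrite sub_inv_neq0 // subr_eq0 -expr2. Qed.

(* Feasibility of the diameter keeps the factors of the q-factorials nonzero. *)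
Lemma feasible_qdiff (q : F) n m : q != 0 -> feasible q n -> (1 <= m <= n)%N ->
  q ^+ m - q ^- m != 0.
Proof. by move=> q0 hf hm; rewrite qdiff_neq0 ?expf_neq0 // -exprM mulnC hf. Qed.

Lemma feasibleW (q : F) n : feasible q n.+1 -> feasible q n.
Proof. by move=> hf k /andP[k1 kn]; apply: hf; rewrite k1 leqW. Qed.

End QNumbers.

Section CorrectionTerm.
Variable F : fieldType.
Variables (q u v us vs : F).
Hypothesis dq : q - q^-1 != 0.

Let q0 : q != 0.
Proof. by apply: contraNneq dq => ->; rewrite invr0 subrr. Qed.

Let dqV : q^-1 - q^-1^-1 != 0.
Proof. by rewrite invrK -oppr_eq0 opprB. Qed.

Lemma sum_beta (a : F) t i n : size t = (n + i)%N ->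
  \sum_(j < i.+1) beta q u v a t j =
  qint q i.+1 * (u * q^-1 * a / q ^+ n + v * q * q ^+ n).
Proof.
move=> hn; rewrite /beta big_split /=.
under eq_bigr do rewrite /weight !expr0 !mulr1.
under [X in _ + X]eq_bigr do rewrite /weight !expr0 !mulr1.
rewrite -!mulr_sumr !invrK !sum_sq_powers // qint_inv.
rewrite hn !exprD !exprVn; field.
by rewrite !expf_neq0 ?q0.
Qed.

Lemma sum_gam (a : F) t i n : size t = (n + i)%N -> a != 0 ->
  \sum_(l < i.+1) gam q us vs a t i l =
  qint q i.+1 * (us * q ^+ n + vs * q * q / (a * q ^+ n)).
Proof.
move=> hn a0; rewrite /gam big_split /= -!mulr_sumr !sum_sq_powers // qint_inv.
rewrite hn !exprD !exprMn !exprVn; field.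
by rewrite !expf_neq0 ?q0 ?oner_neq0 ?a0.
Qed.

End CorrectionTerm.

Section DrinfeldSums.
Variable F : fieldType.

Lemma drinfeld_sum_step (s s' : nat -> F) (phi : nat -> F) th n :
  s n.+1 = 0 -> s' 0%N = s 0%N ->
  (forall i, (i <= n)%N -> s' i.+1 = s i.+1 + (th - phi (n - i)%N) * s i) ->
  \sum_(i < n.+2) s' (n.+1 - i)%N *: \prod_(j < i) ((phi j)%:P - 'X) =
  (th%:P - 'X) * \sum_(i < n.+1) s (n - i)%N *: \prod_(j < i) ((phi j)%:P - 'X).
Proof.
move=> hbig h0 hrec.
set Fp := fun i : nat => \prod_(j < i) ((phi j)%:P - 'X).
have FpS i : Fp i.+1 = Fp i * ((phi i)%:P - 'X) by rewrite /Fp big_ord_recr.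
rewrite -(big_mkord xpredT (fun i => s' (n.+1 - i)%N *: Fp i)).
rewrite -(big_mkord xpredT (fun i => s (n - i)%N *: Fp i)).
rewrite big_nat_recr //= subnn.
rewrite (@eq_big_nat _ _ _ 0 n.+1 _ (fun i => s (n - i).+1 *: Fp i +
   (s (n - i)%N *: ((th%:P - 'X) * Fp i) - s (n - i)%N *: Fp i.+1))); last first.
  move=> i /andP[_ hi]; rewrite ltnS in hi.
  rewrite subSn // hrec ?leq_subr // subKn // scalerDl; congr (_ + _).
  rewrite FpS -scalerBr mulrC -scalerA; congr (_ *: _).
  by rewrite [Fp i * _]mulrC -mulrBl opprB addrA subrK -polyCB mul_polyC.
rewrite big_split /= sumrB.
have -> : \sum_(0 <= i < n.+1) s (n - i)%N *: ((th%:P - 'X) * Fp i) =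
  (th%:P - 'X) * \sum_(0 <= i < n.+1) s (n - i)%N *: Fp i.
  by rewrite mulr_sumr; apply: eq_bigr => i _; rewrite scalerAr.
rewrite big_nat_recl // subn0 hbig scale0r add0r.
rewrite [X in _ + (_ - X) + _]big_nat_recr //= subnn h0.
rewrite (@eq_big_nat _ _ _ 0 n _ (fun i => s (n - i)%N *: Fp i.+1)); last first.
  by move=> i /andP[_ hi]; rewrite subnSK.
by rewrite opprD addrCA addNKr subrK.
Qed.

End DrinfeldSums.

Lemma structure_factors_neq0 (F : fieldType) (q b bs x y : F) :
  q != 0 -> q ^+ 2 != 1 -> b != 0 -> bs != 0 ->
  x * y = - (b * bs * q^-1 * (q - q^-1) ^+ 2) -> x != 0 /\ y != 0.
Proof.
move=> q0 hq2 hb hbs hxy; apply/andP; rewrite -negb_or -mulf_eq0 hxy oppr_eq0.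
by rewrite !mulf_neq0 ?invr_neq0 ?expf_neq0 ?qdiff_neq0.
Qed.

Section DrinfeldFactorization.
Variable F : fieldType.
Variables (q u v us vs b c bs cs : F).
Hypotheses (q0 : q != 0) (hq2 : q ^+ 2 != 1).
Hypotheses (hb : b != 0) (hc : c != 0) (hbs : bs != 0) (hcs : cs != 0).
Hypothesis huv : u * vs = - (b * bs * q^-1 * (q - q^-1) ^+ 2).
Hypothesis hvu : v * us = - (c * cs * q^-1 * (q - q^-1) ^+ 2).

Let dq : q - q^-1 != 0. Proof. exact: qdiff_neq0. Qed.
Let u0 : u != 0. Proof. by case: (structure_factors_neq0 q0 hq2 hb hbs huv). Qed.
Let v0 : v != 0. Proof. by case: (structure_factors_neq0 q0 hq2 hc hcs hvu). Qed.

(* The root of (lambda - theta a) contributed by the tensor factor V(a). *)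
Definition theta (a : F) : F :=
  (u * us * q^-1 * a + v * vs * q ^+ 3 / a) / (q - q^-1) ^+ 2.

Definition phi (j : nat) : F := b * bs * q ^- (2 * j) + c * cs * q ^+ (2 * j).

Lemma correction_eq (a : F) t i : a != 0 -> (i <= size t)%N ->
  (\sum_(j < i.+1) beta q u v a t j) * (\sum_(l < i.+1) gam q us vs a t i l) =
  (theta a - phi (size t - i)) * (q ^+ i.+1 - q ^- i.+1) ^+ 2.
Proof.
move=> a0 hi; set n := (size t - i)%N; have hn : size t = (n + i)%N by rewrite subnK.
have hvs : vs = - (b * bs * q^-1 * (q - q^-1) ^+ 2) / u by rewrite -huv mulrC mulKf.
have hus : us = - (c * cs * q^-1 * (q - q^-1) ^+ 2) / v by rewrite -hvu mulrC mulKf.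
rewrite (sum_beta u v dq a hn) (sum_gam us vs dq hn a0) /qint /theta /phi hvs hus.
rewrite ![(2 * n)%N]mulnC !exprM; field.
by rewrite -sub_inv_neq0 ?dq ?a0 ?u0 ?v0 ?q0 ?expf_neq0.
Qed.

Lemma sigma_cons (a : F) t i : a != 0 -> feasible q (size t).+1 -> (i <= size t)%N ->
  sigma q u v us vs (a :: t) i.+1 =
  sigma q u v us vs t i.+1 + (theta a - phi (size t - i)) * sigma q u v us vs t i.
Proof.
move=> a0 hf hi.
have hm : q ^+ i.+1 - q ^- i.+1 != 0 by rewrite (feasible_qdiff q0 hf) // ltnS.
have hP : \prod_(1 <= k < i.+1) (q ^+ k - q ^- k) ^+ 2 != 0.
  rewrite prodf_seq_neq0; apply/allP => k; rewrite mem_index_iota => /andP[k1 ki].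
  rewrite ltnS in ki.
  by rewrite expf_neq0 // (feasible_qdiff q0 hf) // k1 (leq_trans ki) // leqW.
rewrite /sigma zeta_cons // (correction_eq a0 hi) big_nat_recr //=; field.
by rewrite hP -sub_inv_neq0 ?hm ?expf_neq0.
Qed.

Lemma drinfeld_cons (a : F) t : a != 0 -> feasible q (size t).+1 ->
  drinfeld_poly q u v us vs b c bs cs (a :: t) =
  ('X - (theta a)%:P) * drinfeld_poly q u v us vs b c bs cs t.
Proof.
move=> a0 hf; rewrite /drinfeld_poly [size _]/=.
rewrite (@drinfeld_sum_step _ (sigma q u v us vs t) _ phi (theta a)).
- by rewrite exprS -scalerA scaleN1r scalerAr -mulNr opprB.
- by rewrite sigma_big.
- by rewrite !sigma0.
by move=> i hi; rewrite sigma_cons.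
Qed.

Lemma drinfeld_prod s : all (fun a => a != 0) s -> feasible q (size s) ->
  drinfeld_poly q u v us vs b c bs cs s = \prod_(a <- s) ('X - (theta a)%:P).
Proof.
elim: s => [|a t IH] /=.
  move=> _ _; rewrite /drinfeld_poly /= big_nil expr0 scale1r.
  by rewrite big_ord_recr big_ord0 /= add0r big_ord0 sigma0 scale1r.
move=> /andP[a0 ha] hf; rewrite drinfeld_cons // IH ?big_cons //.
exact: feasibleW.
Qed.

End DrinfeldFactorization.

(* Over an algebraically closed field, theta takes every value at some
   nonzero a: theta a = z is a quadratic equation in a with nonzero
   constant term. *)
Lemma theta_onto (F : closedFieldType) (q u v us vs : F) :
  q != 0 -> q - q^-1 != 0 -> u * us != 0 -> v * vs != 0 ->
  forall z, exists2 a, a != 0 & theta q u v us vs a = z.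
Proof.
move=> q0 dq huus hvvs z.
set A := u * us * q^-1; set B := v * vs * q ^+ 3; set D := (q - q^-1) ^+ 2.
have hA : A != 0 by rewrite mulf_neq0 ?invr_neq0.
have hB : B != 0 by rewrite mulf_neq0 ?expf_neq0.
have [a ha] := @solve_monicpoly F 2 (nth 0 [:: - B / A; z * D / A]) isT.
move: ha; rewrite !big_ord_recr big_ord0 /= add0r expr0 expr1 mulr1 => ha.
have a0 : a != 0.
  apply: contra_eq_neq ha => ->; rewrite expr2 mul0r mulr0 addr0 eq_sym.
  by rewrite mulf_eq0 oppr_eq0 invr_eq0 negb_or hA hB.
have hquad : A * a ^+ 2 + B = z * D * a by rewrite ha; field.
exists a => //; rewrite /theta -/A -/B -/D.
have -> : A * a + B / a = (A * a ^+ 2 + B) / a by field.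
by rewrite hquad; field; rewrite a0 expf_neq0.
Qed.

Lemma map_onto (T U : Type) (P : pred T) (f : T -> U) :
  (forall z, exists2 a, P a & f a = z) ->
  forall r : seq U, exists2 s, all P s & map f s = r.
Proof.
move=> hf; elim=> [|z r [s hs <-]]; first by exists [::].
by have [a ha <-] := hf z; exists (a :: s); rewrite /= ?ha.
Qed.

Theorem proposition7p16 (F : closedFieldType) (q : F)
  (b c bs cs u v us vs : F) :
  q != 0 -> q ^+ 2 != 1 ->
  b != 0 -> c != 0 -> bs != 0 -> cs != 0 ->
  u * vs = - (b * bs * q^-1 * (q - q^-1) ^+ 2) ->
  v * us = - (c * cs * q^-1 * (q - q^-1) ^+ 2) ->
  forall (d : nat) (P : {poly F}),
    feasible q d -> P \is monic -> size P = d.+1 ->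
    exists s : seq F,
      [/\ size s = d, all (fun a => a != 0) s &
          drinfeld_poly q u v us vs b c bs cs s = P].
Proof.
move=> q0 hq2 hb hc hbs hcs huv hvu d P hf hmon hsz.
have [u0 vs0] := structure_factors_neq0 q0 hq2 hb hbs huv.
have [v0 us0] := structure_factors_neq0 q0 hq2 hc hcs hvu.
have [r hr] := closed_field_poly_normal P.
rewrite (monicP hmon) scale1r in hr.
have [s hs hsr] := map_onto (theta_onto q0 (qdiff_neq0 q0 hq2)
  (mulf_neq0 u0 us0) (mulf_neq0 v0 vs0)) r.
have hsd : size s = d by move: hsz; rewrite hr size_prod_XsubC -hsr size_map => -[].
exists s; split => //.
by rewrite drinfeld_prod // ?hsd // hr -hsr big_map.
Qed.
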